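(* Consider the problem and the UCGS iterates described in the context, and suppose the parameters satisfy $\beta_k\ge L_k\gamma_k$ for all $k$. Then for every $k\ge1$ and every $x\in X$, $$f(y_k)-\ell_k(x)\le\frac{\varepsilon}{2}+\Gamma_k\sum_{i=1}^k\frac{\gamma_i\beta_i}{2\Gamma_i}\big(\|x-x_{i-1}\|^2-\|x-x_i\|^2\big)+\Gamma_k\sum_{i=1}^k\frac{\gamma_i\eta_i}{\Gamma_i},$$ where $\ell_k(x):=\Gamma_k\sum_{i=1}^k\frac{\gamma_i}{\Gamma_i}\big(f(z_i)+\langle\nabla f(z_i),x-z_i\rangle\big)$.
   Context: Problem: $\min_{x\in X}f(x)$, where $X\subset\mathbb{R}^n$ is nonempty, compact, convex (Euclidean norm), and $f$ is convex and differentiable. ACGM procedure with input $(g,u,\beta,\eta)$, $u\in X$: with $\phi(x)=\langle g,x\rangle+\frac\beta2\|x-u\|^2$, set $u^0=u$; for $t=1,2,\dots$ compute $v^t\in X$ with $\langle\nabla\phi(u^{t-1}),v^t-x\rangle\le\delta^t$ for all $x\in X$; if $\langle\nabla\phi(u^{t-1}),u^{t-1}-v^t\rangle\le\eta-\delta^t$ output $u^{t-1}$, else $u^t=(1-\alpha^t)u^{t-1}+\alpha^tv^t$, $\alpha^t\in[0,1]$. UCGS iterates with accuracy $\varepsilon>0$, start $x_0\in X$, $y_0:=x_0$, positive parameters $\beta_k,\eta_k$: at outer iteration $k=1,2,\dots$, with the accepted value $L_k>0$, $\gamma_1=1$ and, for $k\ge2$, $\gamma_k\in(0,1]$ solves $L_k\gamma_k^2/k=\Gamma_{k-1}(1-\gamma_k)$;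 $\Gamma_k:=L_k\gamma_k^2/k$ (so $\Gamma_k=(1-\gamma_k)\Gamma_{k-1}$ for $k\ge2$); $z_k=(1-\gamma_k)y_{k-1}+\gamma_kx_{k-1}$; $x_k:=$ output of ACGM with $g=\nabla f(z_k)$, $u=x_{k-1}$, $\beta=\beta_k$, $\eta=\eta_k$; $y_k=(1-\gamma_k)y_{k-1}+\gamma_kx_k$; and $L_k$ is such that $f(y_k)\le f(z_k)+\langle\nabla f(z_k),y_k-z_k\rangle+\frac{L_k}{2}\|y_k-z_k\|^2+\frac{\varepsilon}{2}\gamma_k$. *)

From HB Require Import structures.
From mathcomp Require Import all_boot all_order all_algebra.
From mathcomp Require Import all_classical all_reals.
From mathcomp Require Import topology normedtype derive convex.
Set Implicit Arguments. Unset Strict Implicit. Unset Printing Implicit Defensive.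
Import Order.TTheory GRing.Theory Num.Theory.
Import numFieldNormedType.Exports.
Local Open Scope classical_set_scope.
Local Open Scope ring_scope.

Definition dotv {R : realType} {n : nat} (u v : 'rV[R]_n) : R :=
  \sum_(i < n) u 0 i * v 0 i.
Definition sqnorm {R : realType} {n : nat} (u : 'rV[R]_n) : R := dotv u u.

(* ACGM procedure with input (g, u, beta, eta): phi(x) = <g,x> + beta/2 ||x-u||^2,
   so grad phi(w) = g + beta (w - u).  [ACGM_output X g u beta eta out] means that
   some admissible run of the procedure (choices of v^t, delta^t, alpha^t)
   terminates and outputs [out]. *)
Definition ACGM_output {R : realType} {n : nat} (X : set 'rV[R]_n)
  (g u : 'rV[R]_n) (beta eta : R) (out : 'rV[R]_n) : Prop :=
  let gphi := fun w : 'rV[R]_n => g + beta *: (w - u) in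
  exists (T : nat) (us vs : nat -> 'rV[R]_n) (delta alpha : nat -> R),
    [/\ (0 < T)%N /\ us 0%N = u,
     (forall t, (1 <= t <= T)%N ->
        X (vs t) /\ forall x, X x -> dotv (gphi (us t.-1)) (vs t - x) <= delta t),
     (forall t, (1 <= t < T)%N ->
        [/\ eta - delta t < dotv (gphi (us t.-1)) (us t.-1 - vs t),
            0 <= alpha t <= 1 &
            us t = (1 - alpha t) *: us t.-1 + alpha t *: vs t]),
     dotv (gphi (us T.-1)) (us T.-1 - vs T) <= eta - delta T &
     out = us T.-1].

Definition Gam {R : realType} (L gam : nat -> R) (k : nat) : R :=
  L k * gam k ^+ 2 / k%:R.

(* One outer iteration gives
     f(y_k) <= (1 - gamma_k) f(y_{k-1}) + gamma_k (f(z_k) + <grad f(z_k), x - z_k>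
               + beta_k/2 (|x - x_{k-1}|^2 - |x - x_k|^2) + eta_k + eps/2):
   combine the test accepting L_k, the gradient inequality of f at z_k, the
   stopping rule of ACGM and the three-point identity, the quadratic term being
   absorbed by L_k gamma_k <= beta_k.  As (1 - gamma_k)/Gamma_k = 1/Gamma_{k-1}
   and gamma_1 = 1, dividing by Gamma_k makes this recursion telescope, and
   sum_i gamma_i/Gamma_i = 1/Gamma_k collapses the eps/2 terms into one. *)

From HB Require Import structures.
From mathcomp Require Import all_boot all_order all_algebra.
From mathcomp Require Import all_classical all_reals.
From mathcomp Require Import topology normedtype derive convex.
From mathcomp Require Import ring lra.
Set Implicit Arguments. Unset Strict Implicit. Unset Printing Implicit Defensive.
Import Order.TTheory GRing.Theory Num.Theory.
Import numFieldNormedType.Exports.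
Local Open Scope classical_set_scope.
Local Open Scope ring_scope.

Section dotv_algebra.
Context {R : realType} {n : nat}.
Implicit Types (a b c : 'rV[R]_n) (r : R).

Local Ltac coordinatewise := rewrite /sqnorm /dotv;
  do 3 (rewrite ?mulr_sumr -?sumrN -?big_split /=);
  apply: eq_bigr => i _; rewrite !mxE; ring.

Lemma dotvDl a b c : dotv (a + b) c = dotv a c + dotv b c.
Proof. coordinatewise. Qed.

Lemma dotvDr a b c : dotv a (b + c) = dotv a b + dotv a c.
Proof. coordinatewise. Qed.

Lemma dotvZl r a b : dotv (r *: a) b = r * dotv a b.
Proof. coordinatewise. Qed.

Lemma dotv_conv r a b c u :
  dotv a ((1 - r) *: b + r *: c - u) = (1 - r) * dotv a (b - u) + r * dotv a (c - u).
Proof. coordinatewise. Qed.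

Lemma sqnormZ r a : sqnorm (r *: a) = r ^+ 2 * sqnorm a.
Proof. coordinatewise. Qed.

Lemma sqnorm_ge0 a : 0 <= sqnorm a.
Proof. by apply: sumr_ge0 => i _; rewrite -expr2 sqr_ge0. Qed.

Lemma dotv_three_point a b c :
  2 * dotv (a - b) (a - c) = sqnorm (c - a) + sqnorm (a - b) - sqnorm (c - b).
Proof. coordinatewise. Qed.

End dotv_algebra.

Lemma convex_derive_le (R : realType) (V : normedModType R) (f : V -> R) (w v : V) :
  convex_function setT f -> derivable f w (v - w) -> f w + 'D_(v - w) f w <= f v.
Proof.
move=> cvx_f der_f; set d := v - w.
have quot_cvg : (fun h : R => h^-1 *: ((f \o shift w) (h *: d) - f w)) @ 0^'+
    --> 'D_d f w.
  apply: cvg_trans der_f => P; rewrite /= !near_simpl !near_withinE.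
  by apply: filterS => h Ph h_gt0; apply: Ph; rewrite gt_eqF.
(* For 0 < h < 1 convexity bounds the difference quotient by f v - f w. *)
rewrite addrC -lerBrDr; apply: (cvgr_to_le quot_cvg); near=> h.
have h_gt0 : 0 < h by near: h; exact: nbhs_right_gt.
have h_lt1 : h < 1 by near: h; exact: nbhs_right_lt.
pose t := interval_inference.Itv01 (ltW h_gt0) (ltW h_lt1).
have := cvx_f t v w (in_setT _) (in_setT _).
have -> : @conv R (convex_lmodType V) t v w = h *: d + w.
  by rewrite /conv /= /d /unstable.onem scalerBl scale1r scalerBr addrA [RHS]addrAC.
rewrite /= convRE /= /unstable.onem mulrBl mul1r => chord.
rewrite -[X in X <= _]/(h^-1 * (f (h *: d + w) - f w)) ler_pdivrMl //.
lra.
Unshelve. all: by end_near.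
Qed.

Lemma ACGM_output_le (R : realType) n (X : set 'rV[R]_n) (p u0 : 'rV[R]_n)
    (beta eta : R) (out : 'rV[R]_n) :
  ACGM_output X p u0 beta eta out ->
  forall w, X w -> dotv (p + beta *: (out - u0)) (out - w) <= eta.
Proof.
case=> T [us [vs [delta [alpha [[T_gt0 _] lin_opt _ stop ->]]]]] w Xw.
have [_ /(_ w Xw) vT_opt] := lin_opt T (ltac:(by rewrite T_gt0 leqnn)).
have -> : us T.-1 - w = (us T.-1 - vs T) + (vs T - w) by rewrite subrKA.
rewrite dotvDr; lra.
Qed.

Section estimate_sequence.
Variables (R : realFieldType) (gam Gam : nat -> R).
Hypothesis gam1 : gam 1%N = 1.
Hypothesis Gam_gt0 : forall {i}, (1 <= i)%N -> 0 < Gam i.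
Hypothesis GamS : forall {i}, (2 <= i)%N -> Gam i = Gam i.-1 * (1 - gam i).

Lemma onem_gam_div_Gam i : (2 <= i)%N -> (1 - gam i) / Gam i = (Gam i.-1)^-1.
Proof.
move=> i_ge2; have Gi_gt0 := Gam_gt0 (ltnW i_ge2); rewrite GamS // in Gi_gt0.
have onem_neq0 : 1 - gam i != 0 by apply: contraTneq Gi_gt0 => ->; rewrite mulr0 ltxx.
by rewrite GamS // invfM mulrCA mulfV // mulr1.
Qed.

Lemma sum_gam_div_Gam k : (1 <= k)%N ->
  \sum_(1 <= i < k.+1) gam i / Gam i = (Gam k)^-1.
Proof.
elim: k => [//|[|k] IH _]; first by rewrite big_nat1 gam1 mul1r.
rewrite big_nat_recr //= IH // -(@onem_gam_div_Gam k.+2 isT).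
by rewrite mulrBl mul1r subrK.
Qed.

Lemma estimate_sequence_le (a b : nat -> R) :
  (forall i, (1 <= i)%N -> a i <= (1 - gam i) * a i.-1 + gam i * b i) ->
  forall k, (1 <= k)%N -> a k <= Gam k * \sum_(1 <= i < k.+1) gam i / Gam i * b i.
Proof.
move=> rec.
suff div_le k : (1 <= k)%N -> a k / Gam k <= \sum_(1 <= i < k.+1) gam i / Gam i * b i.
  by move=> k k_ge1; rewrite mulrC -ler_pdivrMr ?Gam_gt0 ?div_le.
elim: k => [//|[|k] IH _].
  rewrite big_nat1 gam1 mul1r mulrC; apply: ler_wpM2l; first by rewrite invr_ge0 ltW ?Gam_gt0.
  by have := rec 1%N isT; rewrite gam1 subrr mul0r add0r mul1r.
rewrite big_nat_recr //=.
have Gk_ge0 : 0 <= (Gam k.+2)^-1 by rewrite invr_ge0 ltW ?Gam_gt0.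
apply: (le_trans (ler_wpM2r Gk_ge0 (rec k.+2 isT))); rewrite mulrDl mulrAC.
by rewrite onem_gam_div_Gam //= mulrC lerD ?IH // mulrAC.
Qed.

Lemma Gam_sum_addr (c : nat -> R) e k : (1 <= k)%N ->
  Gam k * \sum_(1 <= i < k.+1) gam i / Gam i * (c i + e)
  = Gam k * \sum_(1 <= i < k.+1) gam i / Gam i * c i + e.
Proof.
move=> k_ge1; under eq_bigr do rewrite mulrDr.
rewrite big_split -mulr_suml sum_gam_div_Gam // mulrDr mulrA mulfV ?mul1r //.
by rewrite gt_eqF ?Gam_gt0.
Qed.

End estimate_sequence.

Lemma ucgs_step (R : realType) n (X : set 'rV[R]_n) (f : 'rV[R]_n -> R)
    (p x0 x1 y0 y1 z u : 'rV[R]_n) (g L beta eta eps : R) :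
  0 <= g <= 1 -> L * g <= beta ->
  f z + dotv p (y0 - z) <= f y0 ->
  z = (1 - g) *: y0 + g *: x0 ->
  ACGM_output X p x0 beta eta x1 ->
  y1 = (1 - g) *: y0 + g *: x1 ->
  f y1 <= f z + dotv p (y1 - z) + L / 2 * sqnorm (y1 - z) + eps / 2 * g ->
  X u ->
  f y1 <= (1 - g) * f y0
          + g * (f z + dotv p (u - z)
                 + beta / 2 * (sqnorm (u - x0) - sqnorm (u - x1)) + eta + eps / 2).
Proof.
move=> /andP[g_ge0 g_le1] Lg_le_beta subgrad z_def acgm y1_def smooth Xu.
have y1_sub_z : y1 - z = g *: (x1 - x0).
  by rewrite y1_def z_def; apply/rowP => i; rewrite !mxE; ring.
have lin_split : dotv p (y1 - z)
    = (1 - g) * dotv p (y0 - z) + g * (dotv p (x1 - u) + dotv p (u - z)).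
  by rewrite y1_def dotv_conv -dotvDr subrKA.
have prox : dotv p (x1 - u)
    <= eta - beta / 2 * (sqnorm (u - x1) + sqnorm (x1 - x0) - sqnorm (u - x0)).
  have := ACGM_output_le acgm Xu.
  by rewrite dotvDl dotvZl -dotv_three_point; lra.
have quad : L / 2 * sqnorm (y1 - z) <= g * beta / 2 * sqnorm (x1 - x0).
  rewrite y1_sub_z sqnormZ mulrA ler_wpM2r ?sqnorm_ge0 //.
  by have := ler_wpM2l g_ge0 Lg_le_beta; lra.
have := ler_wpM2l (ltac:(lra) : 0 <= 1 - g) subgrad.
have := ler_wpM2l g_ge0 prox.
rewrite lin_split in smooth; lra.
Qed.

Theorem mainTheorem4 (R : realType) (n : nat)
  (X : set 'rV[R]_n) (f : 'rV[R]_n -> R) (gradf : 'rV[R]_n -> 'rV[R]_n)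
  (eps : R) (x y z : nat -> 'rV[R]_n) (L gam beta eta : nat -> R) :
  (* problem data *)
  X !=set0 -> compact X -> convex_set X ->
  convex_function setT f ->
  (forall w, differentiable f w) ->
  (forall w v, 'D_v f w = dotv (gradf w) v) ->
  (* UCGS iterates *)
  0 < eps ->
  X (x 0%N) -> y 0%N = x 0%N ->
  (forall k, (1 <= k)%N -> 0 < beta k /\ 0 < eta k) ->
  (forall k, (1 <= k)%N -> 0 < L k) ->
  gam 1%N = 1 ->
  (forall k, (2 <= k)%N ->
     [/\ 0 < gam k, gam k <= 1 &
         L k * gam k ^+ 2 / k%:R = Gam L gam k.-1 * (1 - gam k)]) ->
  (forall k, (1 <= k)%N -> z k = (1 - gam k) *: y k.-1 + gam k *: x k.-1) ->
  (forall k, (1 <= k)%N ->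
     ACGM_output X (gradf (z k)) (x k.-1) (beta k) (eta k) (x k)) ->
  (forall k, (1 <= k)%N -> y k = (1 - gam k) *: y k.-1 + gam k *: x k) ->
  (forall k, (1 <= k)%N ->
     f (y k) <= f (z k) + dotv (gradf (z k)) (y k - z k)
                + L k / 2 * sqnorm (y k - z k) + eps / 2 * gam k) ->
  (* parameter condition *)
  (forall k, (1 <= k)%N -> L k * gam k <= beta k) ->
  forall k, (1 <= k)%N -> forall u, X u ->
    f (y k) - Gam L gam k * \sum_(1 <= i < k.+1)
                 gam i / Gam L gam i * (f (z i) + dotv (gradf (z i)) (u - z i))
    <= eps / 2
       + Gam L gam k * \sum_(1 <= i < k.+1)
           gam i * beta i / (2 * Gam L gam i)
             * (sqnorm (u - x i.-1) - sqnorm (u - x i))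
       + Gam L gam k * \sum_(1 <= i < k.+1) gam i * eta i / Gam L gam i.
Proof.
move=> _ _ _ cvx_f diff_f Df _ _ _ _ L_gt0 gam1 gamS z_def acgm y_def smooth Lgam_le.
move=> k k_ge1 u Xu.
have gam_itv i : (1 <= i)%N -> 0 <= gam i <= 1.
  case: i => [|[|i]] // _; first by rewrite gam1 ler01 lexx.
  by have [/ltW -> -> _] := gamS i.+2 isT.
have Gam_gt0 i : (1 <= i)%N -> 0 < Gam L gam i.
  case: i => [|[|i]] // _; first by rewrite /Gam gam1 expr1n mulr1 divr1 L_gt0.
  have [g_gt0 _ _] := gamS i.+2 isT.
  by rewrite /Gam divr_gt0 ?mulr_gt0 ?exprn_gt0 ?L_gt0.
have GamS i : (2 <= i)%N -> Gam L gam i = Gam L gam i.-1 * (1 - gam i).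
  by move=> i_ge2; have [_ _ <-] := gamS i i_ge2.
have step i : (1 <= i)%N -> f (y i) <= (1 - gam i) * f (y i.-1) + gam i *
    (f (z i) + dotv (gradf (z i)) (u - z i)
     + beta i / 2 * (sqnorm (u - x i.-1) - sqnorm (u - x i)) + eta i + eps / 2).
  move=> i_ge1; apply: ucgs_step (gam_itv i i_ge1) (Lgam_le i i_ge1) _
    (z_def i i_ge1) (acgm i i_ge1) (y_def i i_ge1) (smooth i i_ge1) Xu.
  by rewrite -Df; apply: convex_derive_le => //; exact: diff_derivable.
have regroup : \sum_(1 <= i < k.+1) gam i / Gam L gam i *
      (f (z i) + dotv (gradf (z i)) (u - z i)
       + beta i / 2 * (sqnorm (u - x i.-1) - sqnorm (u - x i)) + eta i)
    = \sum_(1 <= i < k.+1)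
        gam i / Gam L gam i * (f (z i) + dotv (gradf (z i)) (u - z i))
      + \sum_(1 <= i < k.+1) gam i * beta i / (2 * Gam L gam i)
          * (sqnorm (u - x i.-1) - sqnorm (u - x i))
      + \sum_(1 <= i < k.+1) gam i * eta i / Gam L gam i.
  by rewrite -!big_split /=; apply: eq_bigr => i _; rewrite [(2 * _)^-1]invfM; ring.
have := estimate_sequence_le gam1 Gam_gt0 GamS step k_ge1.
rewrite Gam_sum_addr // regroup !mulrDr; lra.
Qed.
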